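(* Consider the stochastic Hydra game described below. From any hydra $H$ with root node $r$ satisfying $T(r)\ge\omega$ (and any current regrowth capacity), one can reach, in one round and with non-zero probabilities, an infinite sequence of hydras $H_1,H_2,\ldots$ with roots $r_1,r_2,\ldots$ such that the smallest ordinal larger than all of $T(r_1),T(r_2),\ldots$ is $T(r)$.
   Context: A hydra is a finite rooted tree; a head is a leaf (together with the edge to its parent). Ordinal mapping: for a hydra, define $T$ on its nodes by $T(v)=0$ for a leaf $v$, and for an internal node $v$ with children $v_1,\ldots,v_m$, $T(v)$ is the natural (Hessenberg) sum $\omega^{T(v_1)}\#\cdots\#\omega^{T(v_m)}$; values lie below $\varepsilon_0$. The game maintains a positive integer regrowth capacity $N$ (initially $4$). A round from hydra $H$: if $H$ is empty the game ends; otherwise Hercules chooses a leaf $l$; let $p$ be its parent and $g$ its grandparent (if it exists), and remove $l$. If $g$ exists, the Hydra nondeterministically repeatedly chooses whether to evolve: each evolution attempt ends the game (the Hydra dies) with probability $1/2$ and otherwise multiplies $N$ by $4$; thus after choosing exactly $m$ evolutions the game continues with probability $2^{-m}$ and capacity $N\cdot4^m$. Then, with $N'$ the current capacity, $N'-1$ copies of the (remaining) subtree rooted at $p$ are grown as new children of $g$. If $g$ does not exist, nothing grows. ''Reach in one round with non-zero probability'' means: for some choice of Hercules' leaf and the Hydra's nondeterministic choices, the resulting hydra occurs at the end of the round with positive probability. *)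

From mathcomp Require Import all_boot all_order all_algebra.
Set Implicit Arguments. Unset Strict Implicit. Unset Printing Implicit Defensive.
Import Order.TTheory GRing.Theory Num.Theory.

(* A hydra is represented by its root node; a node is the (finite) list of
   its children.  The order of children is irrelevant for everything below
   (the ordinal T is invariant under reordering). *)
Inductive hydra := Node of seq hydra.

Definition leaf : hydra := Node [::].
Definition is_leaf (h : hydra) : bool := if h is Node [::] then true else false.

Definition rem_at {A : Type} (i : nat) (s : seq A) : seq A := take i s ++ drop i.+1 s.

(* [chop k path H]: Hercules cuts the head (leaf) reached from the root by
   following the child indices [path].  If the parent p of the leaf is the
   root (path of length 1), nothing grows.  Otherwise (path of length >= 2),
   with g the grandparent, k copies of the remaining subtree rooted at p are
   added as new children of g. *)
Fixpoint chop (k : nat) (path : seq nat) (H : hydra) : option hydra :=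
  let: Node cs := H in
  match path with
  | [::] => None
  | [:: i] =>
      if (i < size cs) && is_leaf (nth leaf cs i)
      then Some (Node (rem_at i cs)) else None
  | [:: i; j] =>
      let: Node ds := nth leaf cs i in
      if (i < size cs) && (j < size ds) && is_leaf (nth leaf ds j)
      then let p' := Node (rem_at j ds) in
           Some (Node (set_nth leaf cs i p' ++ nseq k p'))
      else None
  | i :: rest =>
      if i < size cs then
        match chop k rest (nth leaf cs i) with
        | Some c' => Some (Node (set_nth leaf cs i c'))
        | None => None
        end
      else None
  end.

(* Probability that the round, with Hercules cutting along [path] and the
   Hydra choosing exactly [m] evolutions, continues (the game is not ended by
   the Hydra dying): (1/2)^m if the grandparent exists, 1 otherwise. *)
Definition outcome_prob (path : seq nat) (m : nat) : rat :=
  if 2 <= size path then (((2%:R : rat) ^+ m)^-1)%R else 1%R.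

(* If the
   grandparent exists, after m evolutions the capacity is N * 4^m and
   N * 4^m - 1 copies are grown; if it does not exist, the Hydra makes no
   evolution choice (m = 0) and nothing grows. *)
Definition one_round (N : nat) (H H' : hydra) : Prop :=
  exists (path : seq nat) (m : nat),
    (size path < 2 -> m = 0) /\
    (0 < outcome_prob path m)%R /\
    chop (N * 4 ^ m - 1) path H = Some H'.

(* [Cnf [:: e1; ...; en]] denotes w^e1 + ... + w^en; it is in normal form
   when every ei is and e1 >= ... >= en. *)
Inductive cnf := Cnf of seq cnf.

Fixpoint cnf_cmp (a b : cnf) : comparison :=
  let: Cnf xs := a in
  let: Cnf ys := b in
  (fix lex (xs ys : seq cnf) : comparison :=
     match xs, ys with
     | [::], [::] => Eq
     | [::], _ :: _ => Lt
     | _ :: _, [::] => Gt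
     | x :: xs', y :: ys' =>
         match cnf_cmp x y with
         | Eq => lex xs' ys'
         | c => c
         end
     end) xs ys.

Definition ord_lt (a b : cnf) : bool := if cnf_cmp a b is Lt then true else false.
Definition ord_le (a b : cnf) : bool := if cnf_cmp a b is Gt then false else true.
Definition ord_ge (a b : cnf) : bool := ord_le b a.

Fixpoint cnf_wf (a : cnf) : bool :=
  let: Cnf xs := a in
  (fix all_wf (xs : seq cnf) : bool :=
     match xs with [::] => true | x :: xs' => cnf_wf x && all_wf xs' end) xs
  && sorted ord_ge xs.

Definition ord_zero : cnf := Cnf [::].
Definition omega_pow (e : cnf) : cnf := Cnf [:: e].
Definition ord_omega : cnf := omega_pow (omega_pow ord_zero).

(* Natural (Hessenberg) sum: merge of the exponent lists in descending order. *)
Definition nat_sum (a b : cnf) : cnf :=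
  let: Cnf xs := a in let: Cnf ys := b in Cnf (merge ord_ge xs ys).

Fixpoint T (h : hydra) : cnf :=
  let: Node cs := h in
  (fix go (cs : seq hydra) : cnf :=
     match cs with
     | [::] => ord_zero
     | c :: cs' => nat_sum (omega_pow (T c)) (go cs')
     end) cs.

(* If the root has a head, T H = a + 1 and cutting that head always gives a
   hydra of ordinal a.  Otherwise let c be a child of least ordinal, so that
   T H = s + w^(T c) with s the natural sum of the other children.  If c has
   a head, cutting it turns T c = a + 1 into a and grows k copies, so that
   T H' = s + w^a * (k + 1); as k = N * 4^m - 1 is unbounded in the number m
   of evolutions, these ordinals are cofinal below s + w^(a+1).  If c has no
   head, the same construction applied to c gives ordinals cofinal below T c,
   and replacing c by them gives ordinals cofinal below T H. *)

From HB Require Import structures.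
From mathcomp Require Import all_boot all_algebra zify.
Set Implicit Arguments. Unset Strict Implicit. Unset Printing Implicit Defensive.
Import GRing.Theory Num.Theory.

Fixpoint lex_cmp (xs ys : seq cnf) : comparison :=
  match xs, ys with
  | [::], [::] => Eq
  | [::], _ :: _ => Lt
  | _ :: _, [::] => Gt
  | x :: xs', y :: ys' =>
      match cnf_cmp x y with Eq => lex_cmp xs' ys' | c => c end
  end.

Lemma cnf_cmpE xs ys : cnf_cmp (Cnf xs) (Cnf ys) = lex_cmp xs ys.
Proof. by []. Qed.

Fixpoint cnf_nested_ind (P : cnf -> Prop)
    (IH : forall xs, foldr (fun x acc => P x /\ acc) True xs -> P (Cnf xs))
    (a : cnf) {struct a} : P a :=
  let: Cnf xs := a in
  IH xs ((fix all_P (l : seq cnf) : foldr (fun x acc => P x /\ acc) True l :=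
            match l with
            | [::] => I
            | x :: l' => conj (cnf_nested_ind IH x) (all_P l')
            end) xs).

Lemma cnf_cmp_refl a : cnf_cmp a a = Eq.
Proof.
elim/cnf_nested_ind: a => xs IH; rewrite cnf_cmpE.
by elim: xs IH => //= x xs IHxs [-> IH]; apply: IHxs.
Qed.

Lemma cnf_cmp_eq a b : cnf_cmp a b = Eq -> a = b.
Proof.
elim/cnf_nested_ind: a b => xs IH [ys]; rewrite cnf_cmpE.
elim: xs ys IH => [|x xs IHxs] [|y ys] //= [IHx IH].
case Exy: (cnf_cmp x y) => // /(IHxs _ IH) [->].
by rewrite (IHx _ Exy).
Qed.

Lemma cnf_cmp_opp a b : cnf_cmp b a = CompOpp (cnf_cmp a b).
Proof.
elim/cnf_nested_ind: a b => xs IH [ys]; rewrite !cnf_cmpE.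
elim: xs ys IH => [|x xs IHxs] [|y ys] //= [IHx IH].
by rewrite IHx; case: (cnf_cmp x y) => //=; apply: IHxs.
Qed.

Lemma cnf_cmp_lt_trans a b c :
  cnf_cmp a b = Lt -> cnf_cmp b c = Lt -> cnf_cmp a c = Lt.
Proof.
elim/cnf_nested_ind: a b c => xs IH [ys] [zs]; rewrite !cnf_cmpE.
elim: xs ys zs IH => [|x xs IHxs] [|y ys] [|z zs] //= [IHx IH].
case Exy: (cnf_cmp x y) => //; case Eyz: (cnf_cmp y z) => //.
- by move: Exy Eyz => /cnf_cmp_eq <- /cnf_cmp_eq <-; rewrite cnf_cmp_refl; apply: IHxs.
- by move: Exy => /cnf_cmp_eq ->; rewrite Eyz.
- by move: Eyz => /cnf_cmp_eq <-; rewrite Exy.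
- by rewrite (IHx _ _ Exy Eyz).
Qed.

Lemma cnf_cmp_le_trans a b c :
  cnf_cmp a b <> Gt -> cnf_cmp b c <> Gt -> cnf_cmp a c <> Gt.
Proof.
case Eab: (cnf_cmp a b) => //; case Ebc: (cnf_cmp b c) => // _ _.
- by move: Eab Ebc => /cnf_cmp_eq -> /cnf_cmp_eq ->; rewrite cnf_cmp_refl.
- by move: Eab => /cnf_cmp_eq ->; rewrite Ebc.
- by move: Ebc => /cnf_cmp_eq <-; rewrite Eab.
- by rewrite (cnf_cmp_lt_trans Eab Ebc).
Qed.

Definition cnf_eqb a b := if cnf_cmp a b is Eq then true else false.

Lemma cnf_eqP : Equality.axiom cnf_eqb.
Proof.
move=> a b; rewrite /cnf_eqb; case E: (cnf_cmp a b); constructor.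
- exact: cnf_cmp_eq.
- by move=> Eab; rewrite Eab cnf_cmp_refl in E.
- by move=> Eab; rewrite Eab cnf_cmp_refl in E.
Qed.

HB.instance Definition _ := hasDecEq.Build cnf cnf_eqP.

Lemma ord_leP a b : reflect (cnf_cmp a b <> Gt) (ord_le a b).
Proof. by rewrite /ord_le; case: cnf_cmp; constructor. Qed.

Lemma ord_ltP a b : reflect (cnf_cmp a b = Lt) (ord_lt a b).
Proof. by rewrite /ord_lt; case: cnf_cmp; constructor. Qed.

Lemma ord_ge_total : total ord_ge.
Proof. by move=> a b; rewrite /ord_ge /ord_le (cnf_cmp_opp a b); case: cnf_cmp. Qed.

Lemma ord_ge_trans : transitive ord_ge.
Proof.
by move=> b a c /ord_leP ba /ord_leP cb; apply/ord_leP; apply: cnf_cmp_le_trans cb ba.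
Qed.

Lemma ord_ge_anti : antisymmetric ord_ge.
Proof.
move=> a b; rewrite /ord_ge /ord_le (cnf_cmp_opp a b).
by case E: (cnf_cmp a b) => //= _; apply: cnf_cmp_eq.
Qed.

Lemma ord_ge_refl : reflexive ord_ge.
Proof. by move=> a; rewrite /ord_ge /ord_le cnf_cmp_refl. Qed.

Lemma sorted_ge_nseq n a : sorted ord_ge (nseq n a).
Proof. by case: n => //= n; elim: n => //= n ->; rewrite ord_ge_refl. Qed.

Lemma perm_cat_cons (X : eqType) (s1 s2 : seq X) x :
  perm_eql (s1 ++ x :: s2) (x :: s1 ++ s2).
Proof. by apply/permPl; rewrite -cat1s perm_catCA. Qed.

Lemma cnf_wfE xs : cnf_wf (Cnf xs) = all cnf_wf xs && sorted ord_ge xs.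
Proof. by rewrite /=; congr (_ && _); elim: xs => //= x xs ->. Qed.

Lemma lex_cmp_catl pre xs ys : lex_cmp (pre ++ xs) (pre ++ ys) = lex_cmp xs ys.
Proof. by elim: pre => //= p pre ->; rewrite cnf_cmp_refl. Qed.

Lemma lex_cmp_cat_lt zs pre s : lex_cmp zs (pre ++ s) = Lt ->
  (forall t, lex_cmp zs (pre ++ t) = Lt) \/ exists2 z, zs = pre ++ z & lex_cmp z s = Lt.
Proof.
elim: pre zs => [|p pre IH] [|z zs] /=;
  try by [right; exists [::] | right; exists (z :: zs) | left].
case Ezp: (cnf_cmp z p) => //; last by left.
move: Ezp => /cnf_cmp_eq -> /IH [lt_zs | [z' -> lt_z']]; first by left.
by right; exists z'.
Qed.

Lemma lex_cmp_nseq rest a n :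
  path ord_ge a rest -> size rest < n -> lex_cmp rest (nseq n a) = Lt.
Proof.
elim: rest n => [|r rest IH] [|n] //= /andP [/ord_leP ra ge_rest] size_lt.
case Era: (cnf_cmp r a) => //.
by move/cnf_cmp_eq: Era ge_rest => -> /IH; apply.
Qed.

Lemma lex_cmp_single_lt z rest e : lex_cmp (z :: rest) [:: e] = Lt -> cnf_cmp z e = Lt.
Proof. by rewrite /=; case: cnf_cmp => //; case: rest. Qed.

Definition cnf_succ (a : cnf) : cnf := let: Cnf xs := a in Cnf (rcons xs ord_zero).

Lemma cnf_lt_succ a : cnf_cmp a (cnf_succ a) = Lt.
Proof. by case: a => xs; rewrite cnf_cmpE -cats1 -{1}(cats0 xs) lex_cmp_catl. Qed.

Lemma cnf_succ_le a b : cnf_cmp a b = Lt -> cnf_cmp (cnf_succ a) b <> Gt.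
Proof.
case: a b => [xs] [zs]; rewrite !cnf_cmpE.
elim: xs zs => [|x xs IH] [|z zs] //=.
- by case: z => [[|]]; case: zs.
- by case: (cnf_cmp x z) => //; apply: IH.
Qed.

Lemma cnf_lt_succ_le b a : cnf_cmp b (cnf_succ a) = Lt -> cnf_cmp b a <> Gt.
Proof.
move=> lt_b gt_b; apply: (@cnf_succ_le a b); first by rewrite cnf_cmp_opp gt_b.
by rewrite cnf_cmp_opp lt_b.
Qed.

Lemma ord_ge0 a : ord_ge a ord_zero.
Proof. by case: a => [[|]]. Qed.

Lemma T_Node cs : T (Node cs) = Cnf (sort ord_ge (map T cs)).
Proof.
elim: cs => // c cs IH.
have -> : T (Node (c :: cs)) = nat_sum (omega_pow (T c)) (T (Node cs)) by [].
rewrite IH /=; congr Cnf; apply: (sorted_eq ord_ge_trans ord_ge_anti).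
- exact: (merge_sorted ord_ge_total) (sort_sorted ord_ge_total _).
- exact: sort_sorted ord_ge_total _.
- by rewrite perm_merge perm_sym perm_sort /= perm_cons perm_sym perm_sort.
Qed.

Lemma T_Node_sorted cs s :
  sorted ord_ge s -> perm_eq s (map T cs) -> T (Node cs) = Cnf s.
Proof.
move=> s_sorted s_perm; rewrite T_Node -[in RHS](sorted_sort ord_ge_trans s_sorted).
congr Cnf; apply/(perm_sortP ord_ge_total ord_ge_trans ord_ge_anti).
by rewrite perm_sym.
Qed.

Lemma T_add_leaf A B : T (Node (A ++ leaf :: B)) = cnf_succ (T (Node (A ++ B))).
Proof.
rewrite [T (Node (A ++ B))]T_Node /=; apply: T_Node_sorted.
- case: (sort _ _) (sort_sorted ord_ge_total (map T (A ++ B))) => //= x s.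
  by rewrite rcons_path ord_ge0 andbT.
- by rewrite perm_rcons !map_cat /= perm_sym perm_cat_cons perm_cons perm_sym perm_sort.
Qed.

Lemma split_map_mem (X : Type) (Y : eqType) (f : X -> Y) s y :
  y \in map f s -> exists A x B, s = A ++ x :: B /\ f x = y.
Proof.
elim: s => //= x s IH; rewrite inE => /orP [/eqP ->|/IH [A [x' [B [-> <-]]]]].
- by exists [::], x, s.
- by exists (x :: A), x', B.
Qed.

Lemma is_leafE h : is_leaf h -> h = leaf.
Proof. by case: h => [[|]]. Qed.

Lemma split_leaf (cs : seq hydra) : has is_leaf cs -> exists A B, cs = A ++ leaf :: B.
Proof.
elim: cs => //= c cs IH /orP [/is_leafE ->|/IH [A [B ->]]].
- by exists [::], cs.
- by exists (c :: A), B.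
Qed.

Lemma split_min_child (cs : seq hydra) : 0 < size cs ->
  exists A c B (pre : seq cnf), [/\ cs = A ++ c :: B, sorted ord_ge (rcons pre (T c))
                      & perm_eq pre (map T (A ++ B))].
Proof.
move=> cs_gt0.
have s_perm : perm_eq (sort ord_ge (map T cs)) (map T cs) by rewrite perm_sort.
move: s_perm (sort_sorted ord_ge_total (map T cs)).
case/lastP: (sort ord_ge (map T cs)) => [|pre e] s_perm s_sorted.
  by move/perm_size: s_perm; rewrite size_map; case: cs cs_gt0.
have e_in : e \in map T cs by rewrite -(perm_mem s_perm) mem_rcons mem_head.
have [A [c [B [cs_eq Tc]]]] := split_map_mem e_in.
exists A, c, B, pre; rewrite Tc; split => //.
move: s_perm; rewrite cs_eq !map_cat /= Tc perm_rcons perm_sym perm_cat_cons.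
by rewrite perm_cons perm_sym.
Qed.

Lemma T_replace_min_child A B pre e c ex :
  sorted ord_ge (rcons pre e) -> perm_eq pre (map T (A ++ B)) ->
  ord_ge e (T c) -> sorted ord_ge (T c :: map T ex) ->
  T (Node ((A ++ c :: B) ++ ex)) = Cnf (pre ++ T c :: map T ex).
Proof.
move=> pre_e_sorted pre_perm ge_e_c c_ex_sorted; apply: T_Node_sorted.
- rewrite sorted_cat_cons; apply/andP; split; last exact: c_ex_sorted.
  case: pre {pre_perm} pre_e_sorted => //= p pre'.
  rewrite !rcons_path => /andP [-> ge_last_e].
  exact: ord_ge_trans ge_last_e ge_e_c.
- rewrite !map_cat /= perm_cat_cons perm_sym -catA /= perm_cat_cons perm_cons.
  by rewrite catA perm_cat2r perm_sym -map_cat.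
Qed.

Lemma size_lt_cat_cons (X : Type) (A B : seq X) x : size A < size (A ++ x :: B).
Proof. by rewrite size_cat addnS ltnS leq_addr. Qed.

Lemma nth_size_cat (X : Type) (x0 : X) A B x : nth x0 (A ++ x :: B) (size A) = x.
Proof. by elim: A. Qed.

Lemma set_nth_size_cat (X : Type) (x0 : X) A B x y :
  set_nth x0 (A ++ x :: B) (size A) y = A ++ y :: B.
Proof. by elim: A => //= a A ->. Qed.

Lemma rem_at_size_cat (X : Type) (A B : seq X) x : rem_at (size A) (A ++ x :: B) = A ++ B.
Proof. by rewrite /rem_at take_size_cat // drop_cat ltnNge leqnSn /= subSnn /= drop0. Qed.

Lemma chop_root_leaf k A B :
  chop k [:: size A] (Node (A ++ leaf :: B)) = Some (Node (A ++ B)).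
Proof. by rewrite /= nth_size_cat rem_at_size_cat size_lt_cat_cons. Qed.

Lemma chop_grandchild_leaf k A B D1 D2 :
  chop k [:: size A; size D1] (Node (A ++ Node (D1 ++ leaf :: D2) :: B)) =
  Some (Node ((A ++ Node (D1 ++ D2) :: B) ++ nseq k (Node (D1 ++ D2)))).
Proof.
rewrite /= !nth_size_cat rem_at_size_cat set_nth_size_cat.
by rewrite !size_lt_cat_cons.
Qed.

Lemma chop_child k A B p c c' : 1 < size p -> chop k p c = Some c' ->
  chop k (size A :: p) (Node (A ++ c :: B)) = Some (Node (A ++ c' :: B)).
Proof.
case: p => [|j [|l p]] //= _ chop_c.
by rewrite nth_size_cat chop_c set_nth_size_cat size_lt_cat_cons.
Qed.

Definition growing_round (N : nat) (H H' : hydra) : Prop :=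
  exists path m, 1 < size path /\ chop (N * 4 ^ m - 1) path H = Some H'.

Lemma growing_round_one_round N H H' : growing_round N H H' -> one_round N H H'.
Proof.
case=> p [m [p_long chopped]]; exists p, m; split; first by rewrite ltnNge p_long.
by rewrite /outcome_prob p_long invr_gt0 exprn_gt0 // ltr0n.
Qed.

Lemma root_round N A B : one_round N (Node (A ++ leaf :: B)) (Node (A ++ B)).
Proof.
exists [:: size A], 0; split=> //; split; last exact: chop_root_leaf.
by rewrite /outcome_prob ltr01.
Qed.

Lemma growing_round_copies N m A B D1 D2 :
  growing_round N (Node (A ++ Node (D1 ++ leaf :: D2) :: B))
    (Node ((A ++ Node (D1 ++ D2) :: B) ++ nseq (N * 4 ^ m - 1) (Node (D1 ++ D2)))).
Proof. by exists [:: size A; size D1], m; rewrite chop_grandchild_leaf. Qed.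

Lemma growing_round_child N A B c c' : growing_round N c c' ->
  growing_round N (Node (A ++ c :: B)) (Node (A ++ c' :: B)).
Proof.
case=> p [m [p_long chopped]]; exists (size A :: p), m.
by split; [apply: ltnW | apply: chop_child].
Qed.

Definition cofinal_below (f : nat -> cnf) (a : cnf) : Prop :=
  (forall n, cnf_cmp (f n) a = Lt) /\
  (forall z, cnf_wf z -> cnf_cmp z a = Lt -> exists n, cnf_cmp z (f n) = Lt).

Definition strict_sup (f : nat -> cnf) (a : cnf) : Prop :=
  (forall i, ord_lt (f i) a) /\
  (forall b, cnf_wf b -> (forall i, ord_lt (f i) b) -> ord_le a b).

Lemma eq_cofinal_below f g a : f =1 g -> cofinal_below f a -> cofinal_below g a.
Proof.
move=> eq_fg [f_lt f_cofinal]; split=> [n|z z_wf /(f_cofinal z z_wf) [n lt_z]].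
- by rewrite -eq_fg.
- by exists n; rewrite -eq_fg.
Qed.

Lemma cofinal_below_catl pre f s :
  cofinal_below (fun n => Cnf (f n)) (Cnf s) ->
  cofinal_below (fun n => Cnf (pre ++ f n)) (Cnf (pre ++ s)).
Proof.
case=> f_lt f_cofinal; split=> [n|[zs] zs_wf].
  by rewrite cnf_cmpE lex_cmp_catl; apply: f_lt.
rewrite cnf_cmpE => /lex_cmp_cat_lt [lt_pre|[z zs_eq lt_z]].
  by exists 0; rewrite cnf_cmpE lt_pre.
have z_wf : cnf_wf (Cnf z).
  move: zs_wf; rewrite zs_eq !cnf_wfE all_cat.
  by case/andP=> /andP [_ ->] /cat_sorted2 [_ ->].
have [n lt_n] := f_cofinal _ z_wf lt_z.
by exists n; rewrite zs_eq cnf_cmpE lex_cmp_catl.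
Qed.

Lemma cofinal_below_omega_pow f e :
  cofinal_below f e -> cofinal_below (fun n => Cnf [:: f n]) (Cnf [:: e]).
Proof.
case=> f_lt f_cofinal; split=> [n|[[|z rest]] zs_wf].
- by rewrite cnf_cmpE /= f_lt.
- by exists 0.
- rewrite cnf_cmpE => /lex_cmp_single_lt lt_z.
  have z_wf : cnf_wf z by move: zs_wf; rewrite cnf_wfE /= => /andP [/andP [-> _] _].
  have [n lt_n] := f_cofinal _ z_wf lt_z.
  by exists n; rewrite cnf_cmpE /= lt_n.
Qed.

Lemma cofinal_below_omega_mul a (k : nat -> nat) :
  (forall r, exists n, r < k n) ->
  cofinal_below (fun n => Cnf (nseq (k n).+1 a)) (Cnf [:: cnf_succ a]).
Proof.
move=> k_unbounded; split=> [n|[[|z rest]] zs_wf].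
- by rewrite cnf_cmpE /= cnf_lt_succ.
- by exists 0.
- rewrite cnf_cmpE => /lex_cmp_single_lt /cnf_lt_succ_le.
  case Eza: (cnf_cmp z a) => // _; last by exists 0; rewrite cnf_cmpE /= Eza.
  move/cnf_cmp_eq: Eza zs_wf => -> /andP [_ rest_sorted].
  have [n rest_lt] := k_unbounded (size rest).
  by exists n; rewrite cnf_cmpE /= cnf_cmp_refl; apply: lex_cmp_nseq rest_lt.
Qed.

Lemma cofinal_below_strict_sup f a : cofinal_below f a -> strict_sup f a.
Proof.
case=> f_lt f_cofinal; split=> [i|b b_wf f_lt_b]; first exact/ord_ltP.
apply/ord_leP => gt_ab.
have lt_ba : cnf_cmp b a = Lt by rewrite cnf_cmp_opp gt_ab.
have [n lt_b_fn] := f_cofinal b b_wf lt_ba.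
move/ord_ltP: (f_lt_b n) => lt_fn_b.
by have := cnf_cmp_lt_trans lt_b_fn lt_fn_b; rewrite cnf_cmp_refl.
Qed.

Lemma strict_sup_succ a : strict_sup (fun=> a) (cnf_succ a).
Proof.
split=> [_|b _ /(_ 0) /ord_ltP lt_ab]; first exact/ord_ltP/cnf_lt_succ.
exact/ord_leP/cnf_succ_le.
Qed.

Lemma regrowth_unbounded N : 0 < N -> forall r, exists n, r < N * 4 ^ n - 1.
Proof.
move=> N_gt0 r; exists r.+1.
have : r.+1 < 4 ^ r.+1 by apply: ltn_expl.
have : 4 ^ r.+1 <= N * 4 ^ r.+1 by rewrite leq_pmull.
lia.
Qed.

Fixpoint hydra_nested_ind (P : hydra -> Prop)
    (IH : forall cs, foldr (fun c acc => P c /\ acc) True cs -> P (Node cs))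
    (h : hydra) {struct h} : P h :=
  let: Node cs := h in
  IH cs ((fix all_P (l : seq hydra) : foldr (fun c acc => P c /\ acc) True l :=
            match l with
            | [::] => I
            | c :: l' => conj (hydra_nested_ind IH c) (all_P l')
            end) cs).

Lemma foldr_and_mid (X : Type) (P : X -> Prop) A x B :
  foldr (fun y acc => P y /\ acc) True (A ++ x :: B) -> P x.
Proof. by elim: A => [[]|a A IH [_ /IH]]. Qed.

Definition children (h : hydra) : seq hydra := let: Node cs := h in cs.

Lemma growing_rounds_cofinal N v :
  0 < N -> 0 < size (children v) -> ~~ has is_leaf (children v) ->
  exists vs : nat -> hydra,
    (forall n, growing_round N v (vs n)) /\ cofinal_below (fun n => T (vs n)) (T v).
Proof.
move=> N_gt0; elim/hydra_nested_ind: v => cs IH.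
rewrite [children _]/= => cs_gt0 no_leaf_child.
have [A [c [B [pre [cs_eq pre_c_sorted pre_perm]]]]] := split_min_child cs_gt0.
subst cs; have {IH} IHc := foldr_and_mid IH; clear cs_gt0.
have T_v : T (Node (A ++ c :: B)) = Cnf (pre ++ [:: T c]).
  by rewrite -[A ++ c :: B]cats0 (T_replace_min_child pre_c_sorted pre_perm) ?ord_ge_refl.
rewrite T_v; case: c IHc T_v pre_c_sorted no_leaf_child.
move=> ds IHc _ pre_c_sorted no_leaf_child.
have ds_gt0 : 0 < size ds.
  by case: ds {IHc pre_c_sorted} no_leaf_child => [|//]; rewrite has_cat /= orbT.
have [/split_leaf [D1 [D2 ds_eq]]|no_leaf_grandchild] := boolP (has is_leaf ds).
- subst ds; set c' := Node (D1 ++ D2); pose k n := N * 4 ^ n - 1.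
  exists (fun n => Node ((A ++ c' :: B) ++ nseq (k n) c')).
  split=> [n|]; first exact: growing_round_copies.
  apply: (eq_cofinal_below (f := fun n => Cnf (pre ++ nseq (k n).+1 (T c')))) => [n|].
    rewrite (T_replace_min_child pre_c_sorted pre_perm) ?map_nseq //.
    - by rewrite T_add_leaf; apply/ord_leP; rewrite cnf_lt_succ.
    - exact: (sorted_ge_nseq (k n).+1).
  rewrite T_add_leaf; apply: cofinal_below_catl.
  exact/cofinal_below_omega_mul/regrowth_unbounded.
- have [vsc [rounds_c cofinal_c]] := IHc ds_gt0 no_leaf_grandchild.
  exists (fun n => Node (A ++ vsc n :: B)).
  split=> [n|]; first exact: growing_round_child.
  apply: (eq_cofinal_below (f := fun n => Cnf (pre ++ [:: T (vsc n)]))) => [n|].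
    rewrite -[A ++ _ :: B]cats0 (T_replace_min_child pre_c_sorted pre_perm) //.
    by apply/ord_leP; rewrite cofinal_c.1.
  exact/cofinal_below_catl/cofinal_below_omega_pow.
Qed.

Theorem lemma2p2 (H : hydra) (N : nat) :
  (0 < N)%N ->
  ord_le ord_omega (T H) ->
  exists Hs : nat -> hydra,
    (forall i, one_round N H (Hs i)) /\
    (forall i, ord_lt (T (Hs i)) (T H)) /\
    (forall b, cnf_wf b -> (forall i, ord_lt (T (Hs i)) b) -> ord_le (T H) b).
Proof.
move=> N_gt0; case: H => cs omega_le.
have [/split_leaf [A [B ->]]|no_leaf_child] := boolP (has is_leaf cs).
  exists (fun=> Node (A ++ B)); split=> [_|]; first exact: root_round.
  by rewrite T_add_leaf; apply: strict_sup_succ.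
have cs_gt0 : 0 < size cs by case: cs omega_le no_leaf_child.
have [vs [rounds cofinal]] :=
  growing_rounds_cofinal (v := Node cs) N_gt0 cs_gt0 no_leaf_child.
exists vs; split=> [n|]; first exact: growing_round_one_round.
exact: cofinal_below_strict_sup.
Qed.
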